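(* Let $T$ be a minimal tree. (i) If $T=[[A,B],C]$ for rooted trees $A,B,C$, then $\max\{|A|,|B|\}\le |C|$. (ii) If $T=[[A,B],[[D,E],C]]$ for rooted trees $A,B,C,D,E$, then $\max\{|D|,|E|\}\le\min\{|A|,|B|\}$.
   Context: A rooted tree $T$ is a finite tree with a distinguished vertex, its root; its order $|T|$ is its number of vertices. For vertices $u,v$, the infimum of $u$ and $v$ is the vertex common to the path from $u$ to the root and the path from $v$ to the root that is furthest from the root. A set $X\subseteq V(T)$ is infima closed if the infimum of any two elements of $X$ lies in $X$. $I(T)$ denotes the number of nonempty infima closed subsets of $V(T)$. For $n\ge1$, $m_n=\min\{I(T): |T|=n\}$; a rooted tree $T$ with $I(T)=m_{|T|}$ is called minimal. $[B_1,\dots,B_k]$ denotes the rooted tree whose root has exactly $k$ children, the branches (subtrees of descendants) rooted at these children being $B_1,\dots,B_k$. *)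

From mathcomp Require Import all_boot.
Set Implicit Arguments. Unset Strict Implicit. Unset Printing Implicit Defensive.

Inductive tree := Node of seq tree.

(* Vertices of a rooted tree, as addresses (paths from the root):
   [::] is the root, i :: a is the vertex at address a in the i-th branch. *)
Fixpoint verts (t : tree) : seq (seq nat) :=
  let: Node ts := t in
  [::] :: (fix aux (i : nat) (l : seq tree) : seq (seq nat) :=
             match l with
             | [::] => [::]
             | u :: l' => map (cons i) (verts u) ++ aux i.+1 l'
             end) 0 ts.

Definition tree_order (t : tree) : nat := size (verts t).

(* infimum of two vertices: the last common vertex of their root paths,
   i.e. the longest common prefix of their addresses *)
Fixpoint infimum (u v : seq nat) : seq nat :=
  match u, v with
  | x :: u', y :: v' => if x == y then x :: infimum u' v' else [::]
  | _, _ => [::]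
  end.

Definition vtx (t : tree) (i : 'I_(tree_order t)) : seq nat := nth [::] (verts t) i.

Definition infima_closed (t : tree) (X : {set 'I_(tree_order t)}) : bool :=
  [forall i in X, forall j in X, exists k in X, vtx k == infimum (vtx i) (vtx j)].

Definition infc (t : tree) : nat :=
  #|[set X : {set 'I_(tree_order t)} | (X != set0) && infima_closed X]|.

(* T is minimal iff I(T) = m_|T| = min { I(T') : |T'| = |T| },
   i.e. I(T) <= I(T') for every rooted tree T' of the same tree_order. *)
Definition minimal (t : tree) : Prop :=
  forall t' : tree, tree_order t' = tree_order t -> infc t <= infc t'.

From mathcomp Require Import all_boot zify.
Set Implicit Arguments. Unset Strict Implicit. Unset Printing Implicit Defensive.

(* Splitting the addresses of a node branch by branch (the infimum of
      vertices of different branches is the root) gives the recursion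
        I([T1,...,Tk]) = sum_i I(Ti) + prod_i (I(Ti) + 1)
      (closed sets avoiding the root lie in one branch; those containing it
      are an arbitrary closed choice in every branch).  For the weight
      w(T) = I(T) + 2 this reads w([X,Y]) + 1 = w(X) w(Y) on binary nodes.
   2. Shrinking.  Deleting leaves, every order 0 < n < |T| is the order of
      a strictly lighter tree.
   3. Exchange.
      If one of the inequalities of orders failed, replacing a subtree by a
      shrunken copy turns it into an inequality of weights, and then the
      multiplicative formula for w shows that exchanging two subtrees
      produces a strictly lighter tree of the same order.  Parts (i), (ii)
      are proved for one pair of subtrees; the rest follows by symmetry. *)

(* All bit sequences of length n; subsets of the vertex list of a tree are
   encoded as masks taken from this list. *)
Fixpoint bitseqs (n : nat) : seq bitseq :=
  if n is n'.+1 then map (cons true) (bitseqs n') ++ map (cons false) (bitseqs n')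
  else [:: [::]].

Lemma mem_bitseqs n m : (m \in bitseqs n) = (size m == n).
Proof.
elim: n m => [|n IH] [|b m] //=; rewrite mem_cat.
  by apply/negbTE/negP; case/orP => /mapP [].
rewrite eqSS -IH; apply/orP/idP => [[] /mapP [m' Hm' [_ ->]] //|Hm].
by case: b; [left|right]; apply/mapP; exists m.
Qed.

Lemma uniq_bitseqs n : uniq (bitseqs n).
Proof.
elim: n => //= n IH; rewrite cat_uniq !map_inj_uniq //; try by move=> ? ? [].
rewrite IH andbT; apply/hasPn => _ /mapP [m _ ->].
by apply/negP => /mapP [? _ []].
Qed.

Lemma sum_bitseqsD n1 n2 (F : bitseq -> nat) :
  \sum_(m <- bitseqs (n1 + n2)) F m =
  \sum_(m1 <- bitseqs n1) \sum_(m2 <- bitseqs n2) F (m1 ++ m2).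
Proof.
elim: n1 F => [|n1 IH] F; first by rewrite big_seq1.
by rewrite addSn /= !big_cat !big_map !IH.
Qed.

Definition mask_of n (X : {set 'I_n}) : bitseq := [seq i \in X | i <- enum 'I_n].

Lemma size_mask_of n (X : {set 'I_n}) : size (mask_of X) = n.
Proof. by rewrite size_map size_enum_ord. Qed.

Lemma nth_mask_of n (X : {set 'I_n}) (i : 'I_n) : nth false (mask_of X) i = (i \in X).
Proof. by rewrite (nth_map i) ?size_enum_ord // nth_ord_enum. Qed.

Lemma card_set_mask n (P : pred bitseq) :
  #|[set X : {set 'I_n} | P (mask_of X)]| = \sum_(m <- bitseqs n) P m.
Proof.
have mask_of_inj : injective (@mask_of n).
  by move=> X Y eXY; apply/setP => i; rewrite -!nth_mask_of eXY.
have perm_masks : perm_eq [seq mask_of X | X <- enum {set 'I_n}] (bitseqs n).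
  apply: uniq_perm; rewrite ?uniq_bitseqs ?(map_inj_uniq mask_of_inj) ?enum_uniq //.
  move=> m; rewrite mem_bitseqs; apply/mapP/eqP => [[X _ ->]|Hm].
    exact: size_mask_of.
  exists [set i : 'I_n | nth false m i]; first by rewrite mem_enum.
  apply: (@eq_from_nth _ false) => [|k]; rewrite ?size_mask_of Hm // => Hk.
  by rewrite (nth_mask_of _ (Ordinal Hk)) inE.
rewrite cardsE cardE /enum_mem size_filter -enumT -(count_map (@mask_of n) P).
rewrite (permP perm_masks) -sum1_count big_mkcond.
by apply: eq_bigr => m _; case: (P m).
Qed.

Definition inf_closed (L : seq (seq nat)) : bool :=
  all (fun u => all (fun v => infimum u v \in L) L) L.

Definition ne_closed (L : seq (seq nat)) : bool := (L != [::]) && inf_closed L.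

Lemma inf_closedP L :
  reflect (forall u v, u \in L -> v \in L -> infimum u v \in L) (inf_closed L).
Proof.
apply: (iffP allP) => [H u v Hu Hv|H u Hu]; first exact: (allP (H u Hu)).
by apply/allP => v; exact: H.
Qed.

Lemma mem_mask_nthP (T : eqType) (d : T) (s : seq T) m u : size m = size s ->
  reflect (exists2 i, i < size s & nth false m i && (nth d s i == u)) (u \in mask m s).
Proof.
elim: s m => [|x s IH] [|b m] //= Hs; first by rewrite in_nil; constructor; case.
case: Hs => /IH {}IH; case: b => /=; last first.
  apply: (iffP IH) => [[i Hi Hm]|[[|i] //= Hi Hm]]; first by exists i.+1.
  by exists i.
rewrite inE; apply: (iffP orP) => [[/eqP<-|/IH [i Hi Hm]]|[[|i] //= Hi Hm]].
- by exists 0 => //=; rewrite eqxx.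
- by exists i.+1.
- by left; rewrite eq_sym.
- by right; apply/IH; exists i.
Qed.

Lemma mem_mask_ofP (T : eqType) (d : T) n (s : seq T) (X : {set 'I_n}) u : size s = n ->
  reflect (exists2 i : 'I_n, i \in X & nth d s i == u) (u \in mask (mask_of X) s).
Proof.
move=> ns; have sizeX : size (mask_of X) = size s by rewrite size_mask_of ns.
apply: (iffP (mem_mask_nthP d u sizeX)) => [[i Hi /andP [Hm Hv]]|[i Hi Hv]].
  by rewrite ns in Hi; exists (Ordinal Hi); rewrite -?nth_mask_of.
by exists i; rewrite ?ns ?ltn_ord // nth_mask_of Hi.
Qed.

Lemma infc_masks t :
  infc t = \sum_(m <- bitseqs (tree_order t)) ne_closed (mask m (verts t)).
Proof.
rewrite /infc -card_set_mask; congr #|pred_of_set _|; apply/setP => X; rewrite !inE.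
have memX u : reflect (exists2 i, i \in X & vtx i == u) (u \in mask (mask_of X) (verts t)).
  exact: mem_mask_ofP.
congr andb.
  apply/set0Pn/idP => [[i Hi]|].
    apply/eqP => H0; have : vtx i \in mask (mask_of X) (verts t) by apply/memX; exists i.
    by rewrite H0.
  case E: (mask _ _) => [|u L] // _.
  have : u \in mask (mask_of X) (verts t) by rewrite E mem_head.
  by case/memX => i Hi _; exists i.
apply/forall_inP/inf_closedP => [H _ _ /memX [i Xi /eqP <-] /memX [j Xj /eqP <-]|H i Xi].
  have /forall_inP /(_ j Xj) /exists_inP [k Xk /eqP e] := H i Xi.
  by apply/memX; exists k; rewrite ?e.
apply/forall_inP => j Xj; apply/exists_inP.
have : infimum (vtx i) (vtx j) \in mask (mask_of X) (verts t).
  by apply: H; apply/memX; [exists i|exists j].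
by case/memX => k Xk /eqP e; exists k; rewrite ?e.
Qed.

Fixpoint branch_verts (i : nat) (ts : seq tree) : seq (seq nat) :=
  if ts is u :: l then map (cons i) (verts u) ++ branch_verts i.+1 l else [::].

Lemma verts_Node ts : verts (Node ts) = [::] :: branch_verts 0 ts.
Proof. by []. Qed.

Lemma size_branch_verts i ts : size (branch_verts i ts) = sumn (map tree_order ts).
Proof. by elim: ts i => //= u l IH i; rewrite size_cat size_map IH. Qed.

Lemma order_Node ts : tree_order (Node ts) = (sumn (map tree_order ts)).+1.
Proof. by rewrite /tree_order verts_Node /= size_branch_verts. Qed.

Lemma order_pair x y : tree_order (Node [:: x; y]) = (tree_order x + tree_order y).+1.
Proof. by rewrite order_Node /= addn0. Qed.

Lemma order_gt0 t : 0 < tree_order t.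
Proof. by case: t => ts; rewrite order_Node. Qed.

Definition from_branch (i : nat) (x : seq nat) : bool :=
  if x is j :: _ then i <= j else false.

Lemma branch_verts_from i ts : all (from_branch i) (branch_verts i ts).
Proof.
elim: ts i => //= u l IH i; rewrite all_cat; apply/andP; split.
  by apply/allP => _ /mapP [y _ ->] /=.
by apply: sub_all (IH i.+1) => -[|j x] //=; apply: ltnW.
Qed.

Lemma infimum_from_branch k u v :
  from_branch k u -> infimum u v = [::] \/ from_branch k (infimum u v).
Proof.
case: u v => [|j u] [|j' v] //= Hj; first by left.
by case: ifP => _; [right|left].
Qed.

Lemma infimum_cons i x y : infimum (i :: x) (i :: y) = i :: infimum x y.
Proof. by rewrite /= eqxx. Qed.

Lemma infimum_nilr u : infimum u [::] = [::].
Proof. by case: u. Qed.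

Lemma infimum_cross i x w : from_branch i.+1 w -> infimum (i :: x) w = [::].
Proof. by case: w => // j w /= ij; rewrite ifN // neq_ltn ij. Qed.

Lemma infimum_crossr i x w : from_branch i.+1 w -> infimum w (i :: x) = [::].
Proof. by case: w => // j w /= ij; rewrite ifN // neq_ltn ij orbT. Qed.

Lemma cons_inj (i : nat) : injective (cons i).
Proof. by move=> x y []. Qed.

Lemma inf_closed_map i L : inf_closed (map (cons i) L) = inf_closed L.
Proof.
apply/inf_closedP/inf_closedP => H.
  by move=> x y Hx Hy; rewrite -(mem_map (@cons_inj i)) -infimum_cons H ?(mem_map (@cons_inj i)).
move=> _ _ /mapP [x Hx ->] /mapP [y Hy ->].
by rewrite infimum_cons (mem_map (@cons_inj i)) H.
Qed.

Section BranchSplit.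

Variables (i : nat) (L1 L2 : seq (seq nat)).
Hypothesis later_L2 : all (from_branch i.+1) L2.

Lemma mem_split_branch x : (i :: x \in [::] :: map (cons i) L1 ++ L2) = (x \in L1).
Proof.
rewrite in_cons mem_cat (mem_map (@cons_inj i)).
suff -> : (i :: x \in L2) = false by rewrite orbF.
by apply/negbTE/negP => /(allP later_L2); rewrite /= ltnn.
Qed.

Lemma mem_split_later w : w = [::] \/ from_branch i.+1 w ->
  (w \in [::] :: map (cons i) L1 ++ L2) = (w \in [::] :: L2).
Proof.
case=> [->|]; first by rewrite !mem_head.
case: w => // j w ij; rewrite !in_cons mem_cat.
suff -> : (j :: w \in map (cons i) L1) = false by [].
by apply/negbTE/mapP => -[x _ [eji _]]; move: ij; rewrite /= eji ltnn.
Qed.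

Lemma infimum_later u v : u \in [::] :: L2 ->
  infimum u v = [::] \/ from_branch i.+1 (infimum u v).
Proof.
rewrite in_cons => /orP [/eqP -> | /(allP later_L2)]; first by left.
exact: infimum_from_branch.
Qed.

Lemma inf_closed_rooted :
  inf_closed ([::] :: map (cons i) L1 ++ L2) = inf_closed L1 && inf_closed ([::] :: L2).
Proof.
set L := [::] :: _.
have later w : w \in [::] :: L2 -> w = [::] \/ from_branch i.+1 w.
  by rewrite in_cons => /orP [/eqP ->|/(allP later_L2)]; [left|right].
apply/inf_closedP/andP => [H|[/inf_closedP H1 /inf_closedP H2]].
  split; apply/inf_closedP.
    by move=> x y Hx Hy; rewrite -mem_split_branch -infimum_cons H ?mem_split_branch.
  move=> u v Hu Hv; rewrite -mem_split_later; last exact: infimum_later.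
  by apply: H; [rewrite (mem_split_later (later _ Hu)) | rewrite (mem_split_later (later _ Hv))].
move=> u v; rewrite {1}/L in_cons mem_cat => /or3P [/eqP -> | /mapP [x Hx ->] | Hu].
- by rewrite mem_head.
- rewrite /L in_cons mem_cat => /or3P [/eqP -> | /mapP [y Hy ->] | Hv].
  + by rewrite infimum_nilr mem_head.
  + by rewrite infimum_cons mem_split_branch H1.
  + by rewrite infimum_cross ?mem_head ?(allP later_L2).
- have Hu' : u \in [::] :: L2 by rewrite in_cons Hu orbT.
  rewrite /L in_cons mem_cat => /or3P [/eqP -> | /mapP [y Hy ->] | Hv].
  + by rewrite infimum_nilr mem_head.
  + by rewrite infimum_crossr ?mem_head ?(allP later_L2).
  + rewrite (mem_split_later (infimum_later v Hu')); apply: H2 => //.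
    by rewrite in_cons Hv orbT.
Qed.

Lemma ne_closed_split :
  ne_closed (map (cons i) L1 ++ L2) =
  (ne_closed L1 && (L2 == [::])) || ((L1 == [::]) && ne_closed L2).
Proof.
case: L1 => [|x L1'] //; case: L2 later_L2 => [|w L2'] later.
  by rewrite cats0 andbT orbF /ne_closed /= -(inf_closed_map i (x :: L1')).
rewrite /= andbF orbF; apply/negbTE/andP => -[_ /inf_closedP H].
have Hw : from_branch i.+1 w by case/andP: later.
have := H (i :: x) w (mem_head _ _); rewrite infimum_cross //.
rewrite !(in_cons, mem_cat) eqxx !orbT => /(_ isT).
case/orP => [//|/orP [/mapP [] //|]].
by rewrite -in_cons => /(allP later).
Qed.

End BranchSplit.

Lemma sum_empty_mask (T : eqType) (s : seq T) :
  \sum_(m <- bitseqs (size s)) (mask m s == [::]) = 1.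
Proof.
elim: s => [|x s IH]; first by rewrite big_seq1.
by rewrite /= big_cat !big_map /= IH big1.
Qed.

Lemma sum_closed_masks u :
  \sum_(m <- bitseqs (tree_order u)) inf_closed (mask m (verts u)) = (infc u).+1.
Proof.
rewrite infc_masks -add1n -(sum_empty_mask (verts u)) -big_split.
by apply: eq_bigr => m _; rewrite /ne_closed; case: (mask m _).
Qed.

(* Infima closed sets of vertices containing the root of a node: one
   independent choice (possibly empty) in every branch. *)
Lemma sum_rooted_closed i ts :
  \sum_(m <- bitseqs (size (branch_verts i ts)))
     inf_closed ([::] :: mask m (branch_verts i ts)) = \prod_(u <- ts) (infc u).+1.
Proof.
elim: ts i => [|u l IH] i; first by rewrite big_nil big_seq1.
rewrite /= size_cat size_map sum_bitseqsD big_cons -(IH i.+1) -sum_closed_masks big_distrl.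
apply: eq_big_seq => m1; rewrite mem_bitseqs => /eqP Hm1; rewrite big_distrr.
apply: eq_bigr => m2 _; rewrite mask_cat ?size_map // -map_mask.
rewrite inf_closed_rooted; first by rewrite -mulnb.
exact: all_mask (branch_verts_from _ _).
Qed.

(* Nonempty infima closed sets of non-root vertices of a node: a nonempty
   infima closed set inside a single branch. *)
Lemma sum_unrooted_closed i ts :
  \sum_(m <- bitseqs (size (branch_verts i ts))) ne_closed (mask m (branch_verts i ts)) =
  \sum_(u <- ts) infc u.
Proof.
elim: ts i => [|u l IH] i; first by rewrite big_nil big_seq1.
rewrite /= size_cat size_map sum_bitseqsD big_cons -(IH i.+1) infc_masks.
set R := \sum_(m <- bitseqs (size (branch_verts i.+1 l))) _.
have split_ne A B : all (from_branch i.+1) B ->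
    ne_closed (map (cons i) A ++ B) =
    ne_closed A * (B == [::]) + (A == [::]) * ne_closed B :> nat.
  move=> HB; rewrite ne_closed_split //; case: A => [|x A] /=.
    by rewrite mul0n mul1n.
  by rewrite orbF mulnb mul0n addn0.
transitivity (\sum_(m1 <- bitseqs (size (verts u)))
                (ne_closed (mask m1 (verts u)) + (mask m1 (verts u) == [::]) * R)).
  apply: eq_big_seq => m1; rewrite mem_bitseqs => /eqP Hm1.
  under eq_bigr => m2 _ do
    rewrite mask_cat ?size_map // -map_mask (split_ne _ _ (all_mask _ (branch_verts_from _ _))).
  by rewrite big_split -!big_distrr /= sum_empty_mask muln1.
by rewrite big_split -big_distrl /= sum_empty_mask mul1n.
Qed.

Lemma infc_Node ts :
  infc (Node ts) = \sum_(u <- ts) infc u + \prod_(u <- ts) (infc u).+1.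
Proof.
rewrite infc_masks verts_Node (_ : tree_order _ = (size (branch_verts 0 ts)).+1) //.
by rewrite /= big_cat !big_map /= sum_rooted_closed sum_unrooted_closed addnC.
Qed.

(* Shrinking: a tree of order > 1 has a tree of one vertex less with
   strictly fewer infima closed sets (delete a leaf). *)
Lemma shrink_by_one t : 1 < tree_order t ->
  exists2 t', (tree_order t').+1 = tree_order t & infc t' < infc t.
Proof.
have [N] := ubnP (tree_order t); elim: N t => // N IH [[|u l]] ltN lt1.
  by rewrite order_Node in lt1.
case: u ltN {lt1} => [[|v vs]] ltN.
  exists (Node l); first by rewrite order_Node order_Node.
  by rewrite !infc_Node !big_cons infc_Node !big_nil /=; lia.
set u := Node (v :: vs) in ltN *.
have u_big : 1 < tree_order u by rewrite /u order_Node /= ltnS addn_gt0 order_gt0.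
have [u' ou' iu'] := IH u ltac:(rewrite order_Node /= in ltN; lia) u_big.
exists (Node (u' :: l)); first by rewrite (order_Node (u' :: l)) (order_Node (u :: l)) /= -ou'.
rewrite (infc_Node (u' :: l)) (infc_Node (u :: l)) !big_cons.
have : (infc u').+1 * \prod_(w <- l) (infc w).+1 <= (infc u).+1 * \prod_(w <- l) (infc w).+1.
  by rewrite leq_mul2r ltnS (ltnW iu') orbT.
lia.
Qed.

Definition weight (t : tree) : nat := (infc t).+2.

Lemma weight_gt1 t : 1 < weight t.
Proof. by []. Qed.

Lemma weight_pair x y : (weight (Node [:: x; y])).+1 = weight x * weight y.
Proof. by rewrite /weight infc_Node !big_cons !big_nil /=; nia. Qed.

Lemma weight_pair_congr x x' y y' : weight x = weight x' -> weight y = weight y' ->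
  weight (Node [:: x; y]) = weight (Node [:: x'; y']).
Proof. by move=> ex ey; apply: succn_inj; rewrite !weight_pair ex ey. Qed.

Lemma weight_pairC x y : weight (Node [:: x; y]) = weight (Node [:: y; x]).
Proof. by apply: succn_inj; rewrite !weight_pair mulnC. Qed.

Lemma weight_pair_monol x x' y :
  weight (Node [:: x; y]) <= weight (Node [:: x'; y]) -> weight x <= weight x'.
Proof. by rewrite -ltnS !weight_pair leq_pmul2r // ltnW. Qed.

Lemma weight_pair_monor x y y' :
  weight (Node [:: x; y]) <= weight (Node [:: x; y']) -> weight y <= weight y'.
Proof. by rewrite !(weight_pairC x); apply: weight_pair_monol. Qed.

Lemma shrink t n : 0 < n < tree_order t ->
  exists2 t', tree_order t' = n & weight t' < weight t.
Proof.
have [N] := ubnP (tree_order t); elim: N t => // N IH t ltN /andP [n_gt0 lt_nt].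
have [t1 ot1 it1] := shrink_by_one (leq_ltn_trans n_gt0 lt_nt).
have wt1 : weight t1 < weight t by rewrite /weight !ltnS.
have [-> | ne_n] := eqVneq n (tree_order t1); first by exists t1.
have [t' ot' wt'] := IH t1 ltac:(lia) ltac:(apply/andP; lia).
by exists t'; rewrite // (ltn_trans wt').
Qed.

Lemma weight_swap x y z : weight z < weight x ->
  weight (Node [:: Node [:: z; y]; x]) < weight (Node [:: Node [:: x; y]; z]).
Proof.
move=> lt_zx; rewrite -ltnS !weight_pair.
have := weight_pair x y; have := weight_pair z y; have := weight_gt1 y; nia.
Qed.

Lemma weight_swap_cousins a b c d e : weight a < weight d -> weight e <= weight b ->
  weight (Node [:: Node [:: d; b]; Node [:: Node [:: a; e]; c]]) <
  weight (Node [:: Node [:: a; b]; Node [:: Node [:: d; e]; c]]).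
Proof.
move=> lt_ad le_eb; rewrite -ltnS !weight_pair.
have eP := weight_pair a b; have eP' := weight_pair d b.
have eQ := weight_pair d e; have eQ' := weight_pair a e.
have eX := weight_pair (Node [:: d; e]) c; have eY := weight_pair (Node [:: a; e]) c.
move: eP eP' eQ eQ' eX eY.
set P := weight (Node [:: a; b]); set P' := weight (Node [:: d; b]).
set Q := weight (Node [:: d; e]); set Q' := weight (Node [:: a; e]).
set X := weight (Node [:: Node [:: d; e]; c]); set Y := weight (Node [:: Node [:: a; e]; c]).
clearbody P P' Q Q' X Y => eP eP' eQ eQ' eX eY.
have lt_PP' : P < P' by rewrite -ltnS eP eP' ltn_mul2r lt_ad ltnW.
have le_sum : P + Q <= P' + Q' by nia.
have le_prod : P' * Q' <= P * Q.
  have : P.+1 * Q.+1 = P'.+1 * Q'.+1 by rewrite eP eQ eP' eQ'; lia.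
  by rewrite !mulSnr !mulnS; lia.
have : P' * Y.+1 <= P * X.+1 by rewrite eX eY !mulnA leq_mul2r le_prod orbT.
by rewrite !mulnS; lia.
Qed.

Lemma minimal_weight t t' : minimal t -> tree_order t' = tree_order t ->
  weight t <= weight t'.
Proof. by move=> min_t /min_t. Qed.

Lemma minimal_eq_weight t t' : minimal t ->
  tree_order t' = tree_order t -> weight t' = weight t -> minimal t'.
Proof. by move=> min_t ot [it] t'' ot''; rewrite it; apply: min_t; rewrite ot''. Qed.

(* Part (i) for the first grandchild: if |C| < |A|, then by minimality C is
   lighter than a shrunken copy of A, hence than A, and exchanging A and C
   would lower the weight. *)
Lemma grandchild_le_uncle A B C :
  minimal (Node [:: Node [:: A; B]; C]) -> tree_order A <= tree_order C.
Proof.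
move=> min_T; rewrite leqNgt; apply/negP => lt_CA.
have /shrink [A' oA' iA'] : 0 < tree_order C < tree_order A by rewrite order_gt0.
have lt_wCA : weight C < weight A.
  have := minimal_weight (t' := Node [:: Node [:: A; B]; A']) min_T.
  rewrite !order_pair oA' => /(_ erefl) /weight_pair_monor le_CA'.
  exact: leq_ltn_trans le_CA' iA'.
have := minimal_weight (t' := Node [:: Node [:: C; B]; A]) min_T.
by rewrite !order_pair leqNgt weight_swap // => /(_ ltac:(lia)).
Qed.

(* Part (i); the case of B follows by symmetry of the inner node. *)
Lemma grandchildren_le_uncle A B C : minimal (Node [:: Node [:: A; B]; C]) ->
  maxn (tree_order A) (tree_order B) <= tree_order C.
Proof.
move=> min_T; rewrite geq_max (grandchild_le_uncle min_T) /=.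
apply: (@grandchild_le_uncle B A); apply: (minimal_eq_weight min_T).
  by rewrite !order_pair [tree_order B + _]addnC.
exact: weight_pair_congr (weight_pairC B A) erefl.
Qed.

(* Part (ii) for D and A: if |A| < |D|, then A is lighter than D (shrink D
   to the order of A); exchanging the inner pairs forces w[D,E] <= w[A,B],
   and exchanging A and D forces w(B) < w(E), which is incompatible. *)
Lemma cousin_le A B C D E :
  minimal (Node [:: Node [:: A; B]; Node [:: Node [:: D; E]; C]]) ->
  tree_order D <= tree_order A.
Proof.
move=> min_T; rewrite leqNgt; apply/negP => lt_AD.
have /shrink [D' oD' iD'] : 0 < tree_order A < tree_order D by rewrite order_gt0.
have lt_wAD : weight A < weight D.
  have := minimal_weight (t' := Node [:: Node [:: D'; B]; Node [:: Node [:: D; E]; C]]) min_T.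
  rewrite !order_pair oD' => /(_ erefl) /weight_pair_monol /weight_pair_monol le_AD'.
  exact: leq_ltn_trans le_AD' iD'.
have le_DE_AB : weight (Node [:: D; E]) <= weight (Node [:: A; B]).
  rewrite leqNgt; apply/negP => /(weight_swap C).
  rewrite weight_pairC (weight_pairC (Node [:: Node [:: D; E]; C])) ltnNge.
  by rewrite minimal_weight // !order_pair; lia.
have lt_BE : weight B < weight E.
  rewrite ltnNge; apply/negP => /(weight_swap_cousins C lt_wAD).
  by rewrite ltnNge minimal_weight // !order_pair; lia.
move: le_DE_AB; rewrite -ltnS !weight_pair leqNgt ltn_mul ?lt_wAD //.
Qed.

(* Part (ii); the other three cases follow by symmetry of the inner nodes. *)
Lemma cousins_le A B C D E :
  minimal (Node [:: Node [:: A; B]; Node [:: Node [:: D; E]; C]]) ->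
  maxn (tree_order D) (tree_order E) <= minn (tree_order A) (tree_order B).
Proof.
move=> min_T.
have swapped A' B' D' E' : tree_order A' + tree_order B' = tree_order A + tree_order B ->
    weight (Node [:: A'; B']) = weight (Node [:: A; B]) ->
    tree_order D' + tree_order E' = tree_order D + tree_order E ->
    weight (Node [:: D'; E']) = weight (Node [:: D; E]) ->
    minimal (Node [:: Node [:: A'; B']; Node [:: Node [:: D'; E']; C]]).
  move=> oAB wAB oDE wDE; apply: (minimal_eq_weight min_T).
    by rewrite !order_pair oAB oDE.
  exact: weight_pair_congr wAB (weight_pair_congr wDE erefl).
have oC x y : tree_order x + tree_order y = tree_order y + tree_order x := addnC _ _.
rewrite geq_max !leq_min (cousin_le min_T).
rewrite (cousin_le (swapped B A D E (oC _ _) (weight_pairC _ _) erefl erefl)).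
rewrite (cousin_le (swapped A B E D erefl erefl (oC _ _) (weight_pairC _ _))).
by rewrite (cousin_le (swapped B A E D (oC _ _) (weight_pairC _ _) (oC _ _) (weight_pairC _ _))).
Qed.

Theorem lemma3p2 (T : tree) (HT : minimal T) :
  (forall A B C : tree,
      T = Node [:: Node [:: A; B]; C] ->
      maxn (tree_order A) (tree_order B) <= tree_order C) /\
  (forall A B C D E : tree,
      T = Node [:: Node [:: A; B]; Node [:: Node [:: D; E]; C]] ->
      maxn (tree_order D) (tree_order E) <= minn (tree_order A) (tree_order B)).
Proof.
split.
  by move=> A B C eT; rewrite eT in HT; exact: grandchildren_le_uncle HT.
by move=> A B C D E eT; rewrite eT in HT; exact: cousins_le HT.
Qed.
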